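(* Let $f(t)=-27(t^2-t+1)$ and $g(t)=-27(2t^3-3t^2-3t+2)$. If $E/\mathbb{Q}$ is an elliptic curve such that $\mathbb{Z}/2\mathbb{Z}\times\mathbb{Z}/2\mathbb{Z}$ embeds into $E_{\mathrm{tors}}(\mathbb{Q})$ and $j(E)\ne0,1728$, then $E$ is $\mathbb{Q}$-isomorphic to an element of $\mathcal{G}$. Moreover, for every $E\in\mathcal{G}$ with $j(E)\ne0,1728$, the fibre of the map $\mathcal{G}\to\mathcal{G}/{\cong_{\mathbb{Q}}}$ containing $E$ has size $6$.
   Context: $\mathcal{E}_t:y^2=x^3+f(t)x+g(t)$ for $t\in\mathbb{Q}$, and $\mathcal{E}_t^d$ is its quadratic twist by $d$. $\mathcal{G}=\{\mathcal{E}_t^d:t\in\mathbb{Q},\ d\in\mathbb{Z}\text{ squarefree},\ \mathrm{Disc}(\mathcal{E}_t^d)\ne0\}$ is regarded as a multiset indexed by the pairs $(t,d)$ (distinct pairs give distinct elements), and $\mathcal{G}\to\mathcal{G}/{\cong_{\mathbb{Q}}}$ sends an element to its $\mathbb{Q}$-isomorphism class. *)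

From HB Require Import structures.
From mathcomp Require Import all_boot all_order all_algebra.
Set Implicit Arguments. Unset Strict Implicit. Unset Printing Implicit Defensive.
Import Order.TTheory GRing.Theory Num.Theory.
Local Open Scope ring_scope.

Definition ff (t : rat) : rat := -27 * (t ^+ 2 - t + 1).
Definition gg (t : rat) : rat := -27 * (2 * t ^+ 3 - 3 * t ^+ 2 - 3 * t + 2).

(* The curve E_{A,B} : y^2 = x^3 + A x + B over Q is encoded by (A, B). *)
Definition disc (A B : rat) : rat := -16 * (4 * A ^+ 3 + 27 * B ^+ 2).
Definition jinv (A B : rat) : rat :=
  1728 * (4 * A ^+ 3) / (4 * A ^+ 3 + 27 * B ^+ 2).

(* Q-isomorphism: an admissible change of variables
   x = u^2 x' + r, y = u^3 y' + s u^2 x' + t  (u <> 0, all in Q)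
   transforms the equation of E_{A,B} into u^6 times that of E_{A',B'}. *)
Definition Qiso (A B A' B' : rat) : Prop :=
  exists u r s t : rat, u != 0 /\
    forall x y : rat,
      (u ^+ 3 * y + s * u ^+ 2 * x + t) ^+ 2
        - ((u ^+ 2 * x + r) ^+ 3 + A * (u ^+ 2 * x + r) + B)
      = u ^+ 6 * (y ^+ 2 - (x ^+ 3 + A' * x + B')).

(* Rational points: None is the point at infinity O. *)
Definition point := option (rat * rat).

Definition on_curve (A B : rat) (P : point) : bool :=
  match P with
  | None => true
  | Some (x, y) => y ^+ 2 == x ^+ 3 + A * x + B
  end.

Definition add_pt (A : rat) (P Q : point) : point :=
  match P, Q with
  | None, _ => Q
  | _, None => P
  | Some (x1, y1), Some (x2, y2) =>
      if (x1 == x2) && (y1 == - y2) then None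
      else
        let l := if x1 == x2 then (3 * x1 ^+ 2 + A) / (2 * y1)
                 else (y2 - y1) / (x2 - x1) in
        let x3 := l ^+ 2 - x1 - x2 in
        Some (x3, l * (x1 - x3) - y1)
  end.

(* Z/2Z x Z/2Z embeds (as a group) into E(Q) (hence into E_tors(Q)). *)
Definition Z2xZ2_embeds (A B : rat) : Prop :=
  exists phi : 'Z_2 * 'Z_2 -> point,
    injective phi /\ (forall a, on_curve A B (phi a)) /\
    (forall a b, phi (a + b) = add_pt A (phi a) (phi b)).

(* squarefree integers (0 is not squarefree) *)
Definition squarefree_int (d : int) : Prop :=
  d != 0 /\ forall n : nat, (n ^ 2 %| `|d|)%N -> n = 1%N.

(* E_t^d : y^2 = x^3 + d^2 f(t) x + d^3 g(t) *)
Definition twA (p : rat * int) : rat := (p.2%:~R) ^+ 2 * ff p.1.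
Definition twB (p : rat * int) : rat := (p.2%:~R) ^+ 3 * gg p.1.

(* index set of the multiset G *)
Definition inG (p : rat * int) : Prop :=
  squarefree_int p.2 /\ disc (twA p) (twB p) != 0.

From HB Require Import structures.
From mathcomp Require Import all_boot all_order all_algebra.
From mathcomp Require Import ring lra zify.
Set Implicit Arguments. Unset Strict Implicit. Unset Printing Implicit Defensive.
Import Order.TTheory GRing.Theory Num.Theory.
Local Open Scope ring_scope.

(* A curve y^2 = x^3 + A x + B with full rational 2-torsion splits as
   (x - a)(x - b)(x - c) with a + b + c = 0.  Putting lambda = (a - b)/(c - b) and
   mu = (c - b)/9, the roots are mu * (3(2 lambda - 1), -3(lambda + 1), 3(2 - lambda)),
   the roots of x^3 + f(lambda) x + g(lambda) scaled by mu; so the curve is the twist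
   of E_lambda by mu, and writing mu = d m^2 with d squarefree makes it isomorphic
   to E_lambda^d in G.  Q-isomorphisms of short Weierstrass models are the scalings
   (A, B) -> (u^4 A, u^6 B); they multiply the roots by u^2 and do not change
   (lambda, d).  Hence the members of G isomorphic to E_t^d are the pairs obtained
   from the six orderings of its roots.  Their lambdas are t, 1 - t, t/(t - 1),
   1/(1 - t), (t - 1)/t, 1/t, which are pairwise distinct unless t is -1, 1/2 or 2
   (j = 1728) or t^2 - t + 1 = 0 (j = 0, impossible over Q). *)

Definition sqrt_part (n : nat) : nat := \max_(k < n.+1 | (k ^ 2 %| n)%N) k.

Definition sqf_kernel (n : nat) : nat := (n %/ sqrt_part n ^ 2)%N.

Lemma sqrt_part_dvd (n : nat) : (0 < n)%N -> (sqrt_part n ^ 2 %| n)%N.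
Proof.
move=> n_gt0; have one_lt : (1 < n.+1)%N by [].
have one_sq : (Ordinal one_lt ^ 2 %| n)%N by rewrite exp1n dvd1n.
rewrite /sqrt_part (bigop.bigmax_eq_arg (Ordinal one_lt)) //.
by case: arg_maxnP.
Qed.

Lemma sqf_kernelK (n : nat) : (0 < n)%N -> n = (sqf_kernel n * sqrt_part n ^ 2)%N.
Proof. by move=> n_gt0; rewrite divnK // sqrt_part_dvd. Qed.

Lemma sqf_kernel_squarefree (n j : nat) : (0 < n)%N ->
  (j ^ 2 %| sqf_kernel n)%N -> j = 1%N.
Proof.
move=> n_gt0; set a := sqrt_part n.
have a_max k : (k ^ 2 %| n)%N -> (k <= a)%N.
  move=> kn; have k_le : (k < n.+1)%N by have := dvdn_leq n_gt0 kn; nia.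
  exact: (leq_bigmax_cond (Ordinal k_le)).
have a_gt0 : (0 < a)%N by apply: a_max; rewrite exp1n dvd1n.
rewrite /sqf_kernel dvdn_divRL ?sqrt_part_dvd // -expnMn => /[dup] ja /a_max.
case: j ja => [|[|j]] //; last by nia.
by rewrite mul0n exp0n // dvd0n; lia.
Qed.

Definition sqf_part (c : rat) : int :=
  let N := numq c * denq c in sgz N * (sqf_kernel `|N|)%:Z.

Lemma sqf_partP (c : rat) : c != 0 ->
  squarefree_int (sqf_part c) /\
  exists2 m : rat, m != 0 & c = (sqf_part c)%:~R * m ^+ 2.
Proof.
move=> c0; rewrite /sqf_part; set N := numq c * denq c.
have N0 : N != 0 by rewrite mulf_neq0 ?numq_eq0 ?denq_neq0.
have N_gt0 : (0 < `|N|)%N by rewrite absz_gt0.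
have k_gt0 : (0 < sqf_kernel `|N|)%N by have := sqf_kernelK N_gt0; nia.
split.
  split; first by rewrite mulf_neq0 ?sgz_eq0 //; lia.
  rewrite abszM.
  have -> : `|sgz N|%N = 1%N by case: sgzP N0.
  by move=> j; rewrite mul1n; exact: sqf_kernel_squarefree.
have den0 : (denq c)%:~R != 0 :> rat by rewrite intr_eq0 denq_neq0.
exists ((sqrt_part `|N|)%:R / (denq c)%:~R).
  rewrite mulf_neq0 ?invr_neq0 // pnatr_eq0 -lt0n.
  by have := sqf_kernelK N_gt0; nia.
have NE : N%:~R = (sgz N * sqf_kernel `|N|)%:~R * (sqrt_part `|N|)%:R ^+ 2 :> rat.
  by rewrite {1}[N]intEsg {1}(sqf_kernelK N_gt0) PoszM mulrA rmorphM /= -pmulrn natrX.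
by rewrite expr_div_n mulrA -NE intrM -[LHS]divq_num_den; field.
Qed.

Lemma squarefree_eq (d1 d2 : int) (q : rat) :
  squarefree_int d1 -> squarefree_int d2 -> d1%:~R = d2%:~R * q ^+ 2 -> d1 = d2.
Proof.
move=> [d1_0 sqf1] [d2_0 sqf2] e.
set a := `|numq q|%N; set b := `|denq q|%N.
have ei : d1 * denq q ^+ 2 = d2 * numq q ^+ 2.
  apply: (@intr_inj rat); rewrite !rmorphM /= e -{1}[q]divq_num_den.
  by field; rewrite intr_eq0 denq_neq0.
have en : (`|d1| * b ^ 2 = `|d2| * a ^ 2)%N.
  by have := congr1 absz ei; rewrite !abszM !mulnn.
have cop : coprime (a ^ 2) (b ^ 2) by rewrite coprimeXl // coprimeXr // coprime_num_den.
have b1 : b = 1%N.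
  by apply: sqf2; rewrite coprime_sym in cop; rewrite -(Gauss_dvdl _ cop) -en dvdn_mull.
have a1 : a = 1%N by apply: sqf1; rewrite -(Gauss_dvdl _ cop) en dvdn_mull.
have den1 : denq q = 1 by have := denq_gt0 q; lia.
have [num1|num1] : numq q = 1 \/ numq q = -1 by lia.
  by move: ei; rewrite den1 num1 !expr1n !mulr1.
by move: ei; rewrite den1 num1 expr1n sqrrN expr1n !mulr1.
Qed.

Lemma sqf_part_eq (c : rat) (D : int) (m : rat) :
  squarefree_int D -> m != 0 -> c = D%:~R * m ^+ 2 -> sqf_part c = D.
Proof.
move=> sqfD m0 cE; have D0 : D%:~R != 0 :> rat by rewrite intr_eq0; case: sqfD.
have c0 : c != 0 by rewrite cE mulf_neq0 ?expf_neq0.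
have [sqf_c [m' m'0 cE']] := sqf_partP c0.
apply: (squarefree_eq sqf_c sqfD (q := m / m')).
by apply: (mulIf (expf_neq0 2 m'0)); rewrite -cE' cE; field.
Qed.

Lemma sqf_part_squarefree (d : int) : squarefree_int d -> sqf_part d%:~R = d.
Proof. by move=> sqfd; apply: (sqf_part_eq sqfd (oner_neq0 _)); rewrite expr1n mulr1. Qed.

Lemma sqf_partZ (k c : rat) : k != 0 -> sqf_part (k ^+ 2 * c) = sqf_part c.
Proof.
move=> k0; have [->|c0] := eqVneq c 0; first by rewrite mulr0.
have [sqf_c [m m0 cE]] := sqf_partP c0.
by apply: (sqf_part_eq sqf_c (mulf_neq0 k0 m0)); rewrite {1}cE; ring.
Qed.

Lemma QisoP (A B A' B' : rat) :
  Qiso A B A' B' <-> exists2 u : rat, u != 0 & A = u ^+ 4 * A' /\ B = u ^+ 6 * B'.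
Proof.
split; last by move=> [u u0 [-> ->]]; exists u, 0, 0, 0; split=> // x y; ring.
move=> [u [r [s [t [u0 H]]]]]; exists u => //.
have cancel_pow k z : z * u ^+ k = 0 -> z = 0.
  by move/eqP; rewrite mulf_eq0 expf_eq0 (negbTE u0) andbF orbF => /eqP.
have t0 : t = 0 by apply: (cancel_pow 3%N); have := H 0 1; have := H 0 (-1); lra.
have s0 : s = 0.
  by apply: (cancel_pow 5%N); have := H 1 1; have := H 1 (-1); rewrite t0; lra.
have r0 : r = 0.
  apply: (cancel_pow 4%N); have := H 1 0; have := H (-1) 0; have := H 0 0.
  by rewrite s0 t0; lra.
have HA : (A - u ^+ 4 * A') * u ^+ 2 = 0.
  by have := H 1 0; have := H (-1) 0; rewrite r0 s0 t0; lra.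
split; first by apply/eqP; rewrite -subr_eq0; apply/eqP/(cancel_pow 2%N).
by have := H 0 0; rewrite r0 s0 t0; lra.
Qed.

Lemma Qiso_sym (A B A' B' : rat) : Qiso A B A' B' -> Qiso A' B' A B.
Proof.
move=> /QisoP[u u0 [-> ->]]; apply/QisoP; exists u^-1; first by rewrite invr_neq0.
by split; field.
Qed.

Lemma disc_scale (u A B : rat) : disc (u ^+ 4 * A) (u ^+ 6 * B) = u ^+ 12 * disc A B.
Proof. by rewrite /disc; ring. Qed.

Lemma jinv_B0 (A B : rat) : disc A B != 0 -> B = 0 -> jinv A B = 1728.
Proof.
move=> dAB B0; have A0 : A != 0.
  by apply: contra_neq dAB => A0; rewrite /disc A0 B0; ring.
by rewrite /jinv B0; field.
Qed.

Definition perms3 (T : Type) (r : T * T * T) : seq (T * T * T) :=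
  let: (a, b, c) := r in
  [:: (a, b, c); (a, c, b); (b, a, c); (b, c, a); (c, a, b); (c, b, a)].

Definition distinct3 (T : eqType) (r : T * T * T) : bool :=
  let: (a, b, c) := r in uniq [:: a; b; c].

Definition scale3 (R : pzRingType) (k : R) (r : R * R * R) : R * R * R :=
  let: (a, b, c) := r in (k * a, k * b, k * c).

Definition root_poly (R : pzRingType) (r : R * R * R) (x : R) : R :=
  let: (a, b, c) := r in (x - a) * (x - b) * (x - c).

Lemma perms3_scale (R : pzRingType) (k : R) (r : R * R * R) :
  perms3 (scale3 k r) = map (scale3 k) (perms3 r).
Proof. by case: r => [[a b] c]. Qed.

Lemma root_poly_perm (R : idomainType) (r r' : R * R * R) :
  distinct3 r -> root_poly r =1 root_poly r' -> r \in perms3 r'.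
Proof.
case: r r' => [[a b] c] [[a' b'] c'] /=; rewrite !inE !negb_or -!andbA.
move=> /and4P[ab ac bc _] E.
have root x : root_poly (a, b, c) x = 0 -> [|| x == a', x == b' | x == c'].
  by rewrite E /= => /eqP; rewrite !mulf_eq0 !subr_eq0 -orbA.
have Ra : root_poly (a, b, c) a = 0 by rewrite /= subrr !mul0r.
have Rb : root_poly (a, b, c) b = 0 by rewrite /= subrr mulr0 mul0r.
have Rc : root_poly (a, b, c) c = 0 by rewrite /= subrr mulr0.
move: (root a Ra) (root b Rb) (root c Rc) ab ac bc; clear.
by move=> /or3P[]/eqP-> /or3P[]/eqP-> /or3P[]/eqP->; rewrite ?eqxx ?orbT.
Qed.

Definition cubic_roots (A B : rat) (r : rat * rat * rat) : Prop :=
  forall x, x ^+ 3 + A * x + B = root_poly r x.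

Lemma cubic_rootsE (A B a b c : rat) : cubic_roots A B (a, b, c) ->
  [/\ a + b + c = 0, A = a * b + b * c + c * a & B = - (a * b * c)].
Proof.
move=> E; have := E 0; have := E 1; have := E (-1); rewrite /= => E1 E2 E3.
have sum0 : a + b + c = 0 by lra.
by split=> //; lra.
Qed.

Lemma cubic_roots_perm (A B : rat) (r r' : rat * rat * rat) :
  cubic_roots A B r -> r' \in perms3 r -> cubic_roots A B r'.
Proof.
case: r => [[a b] c] E; rewrite !inE.
by case/orP=> [|/orP[|/orP[|/orP[|/orP[|]]]]] /eqP-> x; rewrite E /=; ring.
Qed.

Lemma cubic_roots_scale (A B k : rat) (r : rat * rat * rat) : cubic_roots A B r ->
  cubic_roots (k ^+ 4 * A) (k ^+ 6 * B) (scale3 (k ^+ 2) r).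
Proof.
case: r => [[a b] c] /cubic_rootsE[sum0 -> ->] x /=.
by rewrite (_ : c = - a - b); [ring | lra].
Qed.

Lemma disc_cubic_roots (A B a b c : rat) : cubic_roots A B (a, b, c) ->
  disc A B = 16 * ((a - b) * (b - c) * (c - a)) ^+ 2.
Proof.
move=> /cubic_rootsE[sum0 -> ->]; rewrite /disc (_ : c = - a - b); [ring | lra].
Qed.

Lemma cubic_roots_distinct (A B : rat) (r : rat * rat * rat) :
  disc A B != 0 -> cubic_roots A B r -> distinct3 r.
Proof.
case: r => [[a b] c] dAB /disc_cubic_roots dE; rewrite dE in dAB.
have : (a - b) * (b - c) * (c - a) != 0 by apply: contra_neq dAB => ->; rewrite expr0n mulr0.
rewrite !mulf_eq0 !subr_eq0 -orbA !negb_or => /and3P[ab bc ca].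
by rewrite /= !inE !negb_or ab bc (eq_sym a) ca.
Qed.

Lemma cubic_roots_in_perms3 (A B : rat) (r r' : rat * rat * rat) :
  distinct3 r -> cubic_roots A B r -> cubic_roots A B r' -> r \in perms3 r'.
Proof. by move=> r_uniq Er Er'; apply: root_poly_perm r_uniq _ => x; rewrite -Er -Er'. Qed.

Lemma cubic_roots_of_roots (A B a b c : rat) : uniq [:: a; b; c] ->
  a ^+ 3 + A * a + B = 0 -> b ^+ 3 + A * b + B = 0 -> c ^+ 3 + A * c + B = 0 ->
  cubic_roots A B (a, b, c).
Proof.
rewrite /= !inE !negb_or andbT -andbA => /and3P[ab ac bc] ha hb hc.
have cancel (x y z : rat) : x != y -> (x - y) * z = 0 -> z = 0.
  by move=> xy /eqP; rewrite mulf_eq0 subr_eq0 (negbTE xy) => /eqP.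
have hab : a ^+ 2 + a * b + b ^+ 2 + A = 0 by apply: (cancel a b) => //; lra.
have hac : a ^+ 2 + a * c + c ^+ 2 + A = 0 by apply: (cancel a c) => //; lra.
have sum0 : a + b + c = 0 by apply: (cancel b c) => //; lra.
have cE : c = - a - b by lra.
have AE : A = a * b + b * c + c * a by rewrite cE; lra.
have BE : B = - (a * b * c) by rewrite cE; nra.
by move=> x; rewrite /= AE BE cE; ring.
Qed.

Lemma Z2xZ2_roots (A B : rat) : Z2xZ2_embeds A B -> exists r, cubic_roots A B r.
Proof.
move=> [phi [phi_inj [on_phi phiD]]].
have double0 (a : 'Z_2 * 'Z_2) : a + a = 0.
  by rewrite -mulr2n -mulr_natr (_ : 2%:R = 0) ?mulr0 //; apply/eqP.
have phi0 : phi 0 = None.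
  have := phiD 0 0; rewrite addr0.
  case: (phi 0) => [[x y]|] //=; rewrite eqxx /=.
  case: eqP => // yN0 [xE yE]; exfalso; apply: yN0.
  by rewrite -xE subrr mulr0 sub0r in yE.
have root_of a : a != 0 -> exists2 x, phi a = Some (x, 0) & x ^+ 3 + A * x + B = 0.
  move=> a0; have := phiD a a; have := on_phi a; rewrite double0 phi0.
  case E: (phi a) => [[x y]|] /=; last by move: a0; rewrite -(inj_eq phi_inj) E phi0.
  rewrite eqxx /= => /eqP onC; case: eqP => // yN _.
  have y0 : y = 0 by lra.
  by exists x; [rewrite y0 | rewrite -onC y0 expr0n].
have [x1 E1 root1] := root_of (1, 0) isT.
have [x2 E2 root2] := root_of (0, 1) isT.
have [x3 E3 root3] := root_of (1, 1) isT.
exists (x1, x2, x3); apply: cubic_roots_of_roots => //.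
have neq a b x y : phi a = Some (x, 0) -> phi b = Some (y, 0) -> a != b -> x != y.
  by move=> Ea Eb; apply: contra_neq => xy; apply: phi_inj; rewrite Ea Eb xy.
have x12 := neq _ _ _ _ E1 E2 isT; have x13 := neq _ _ _ _ E1 E3 isT.
have x23 := neq _ _ _ _ E2 E3 isT.
by rewrite /= !inE !negb_or x12 x13 x23.
Qed.

Definition twist_roots (p : rat * int) : rat * rat * rat :=
  let: (t, d) := p in
  (d%:~R * (3 * (2 * t - 1)), d%:~R * (-3 * (t + 1)), d%:~R * (3 * (2 - t))).

Lemma cubic_roots_twist (p : rat * int) : cubic_roots (twA p) (twB p) (twist_roots p).
Proof. by case: p => t d x; rewrite /twA /twB /ff /gg /=; ring. Qed.

Lemma disc_twist (t : rat) (d : int) :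
  disc (twA (t, d)) (twB (t, d)) = 16 * (729 * d%:~R ^+ 3 * t * (t - 1)) ^+ 2.
Proof. by rewrite /disc /twA /twB /ff /gg /=; ring. Qed.

Definition legendre_lambda (r : rat * rat * rat) : rat :=
  let: (a, b, c) := r in (a - b) / (c - b).

Definition legendre_scale (r : rat * rat * rat) : rat :=
  let: (a, b, c) := r in (c - b) / 9.

Definition twist_index (r : rat * rat * rat) : rat * int :=
  (legendre_lambda r, sqf_part (legendre_scale r)).

Lemma legendre_scale_neq0 (r : rat * rat * rat) : distinct3 r -> legendre_scale r != 0.
Proof.
case: r => [[a b] c]; rewrite /= !inE !negb_or => /and3P[_ bc _].
by rewrite mulf_neq0 // subr_eq0 eq_sym.
Qed.

Lemma cubic_roots_legendre (A B : rat) (r : rat * rat * rat) :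
  legendre_scale r != 0 -> cubic_roots A B r ->
  A = legendre_scale r ^+ 2 * ff (legendre_lambda r) /\
  B = legendre_scale r ^+ 3 * gg (legendre_lambda r).
Proof.
case: r => [[a b] c] mu0 /cubic_rootsE[sum0 -> ->].
have cb : c - b != 0 by apply: contra_neq mu0 => cb0; rewrite /= cb0 mul0r.
rewrite [legendre_scale _]/= [legendre_lambda _]/= /ff /gg.
by rewrite (_ : a = - b - c); [split; field | lra].
Qed.

Lemma twist_index_spec (A B : rat) (r : rat * rat * rat) :
  disc A B != 0 -> cubic_roots A B r ->
  inG (twist_index r) /\ Qiso A B (twA (twist_index r)) (twB (twist_index r)).
Proof.
move=> dAB rootsAB.
have mu0 := legendre_scale_neq0 (cubic_roots_distinct dAB rootsAB).
have [AE BE] := cubic_roots_legendre mu0 rootsAB.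
have [sqfD [m m0 muE]] := sqf_partP mu0.
set p := twist_index r.
have [AE' BE'] : A = m ^+ 4 * twA p /\ B = m ^+ 6 * twB p.
  by rewrite AE BE muE /twA /twB /=; split; ring.
split; last by apply/QisoP; exists m.
split=> //; apply: contra_neq dAB => dp0.
by rewrite AE' BE' disc_scale dp0 mulr0.
Qed.

Lemma twist_index_scale (k : rat) (r : rat * rat * rat) :
  k != 0 -> twist_index (scale3 (k ^+ 2) r) = twist_index r.
Proof.
case: r => [[a b] c] k0; rewrite /twist_index /= -!mulrBr.
by rewrite -[_ * _ / 9]mulrA sqf_partZ // -mulf_div divff ?mul1r // expf_neq0.
Qed.

Lemma twist_index_twist (p : rat * int) : inG p -> twist_index (twist_roots p) = p.
Proof.
case: p => t d [sqf_d _]; have d0 : d%:~R != 0 :> rat by rewrite intr_eq0; case: sqf_d.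
rewrite /twist_index /=.
have -> : d%:~R * (3 * (2 - t)) - d%:~R * (-3 * (t + 1)) = 9 * d%:~R :> rat by ring.
rewrite [9 * _ / 9]mulrC mulKf // sqf_part_squarefree //; congr (_, _).
by field.
Qed.

Definition anharmonic (R : fieldType) (t : R) : seq R :=
  [:: t; 1 - t; t / (t - 1); 1 / (1 - t); (t - 1) / t; 1 / t].

Lemma anharmonic_uniq (R : realFieldType) (t : R) :
  t != 0 -> t != 1 -> t + 1 != 0 -> t - 2 != 0 -> 2 * t - 1 != 0 -> uniq (anharmonic t).
Proof.
move=> t0 t1 t_1 t_2 t_half.
have t1' : t - 1 != 0 by rewrite subr_eq0.
have t1'' : 1 - t != 0 by rewrite subr_eq0 eq_sym.
have q0 : t ^+ 2 - t + 1 != 0 by apply: lt0r_neq0; nra.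
have neq (x y z : R) : x - y = z -> z != 0 -> x != y by move=> <-; rewrite subr_eq0.
rewrite /anharmonic /= !inE !negb_or !andbT; repeat (apply/andP; split);
[ apply: (neq _ _ (2 * t - 1))
| apply: (neq _ _ (t * (t - 2) / (t - 1)))
| apply: (neq _ _ (- (t ^+ 2 - t + 1) / (1 - t)))
| apply: (neq _ _ ((t ^+ 2 - t + 1) / t))
| apply: (neq _ _ ((t - 1) * (t + 1) / t))
| apply: (neq _ _ (- (t ^+ 2 - t + 1) / (t - 1)))
| apply: (neq _ _ (t * (t - 2) / (1 - t)))
| apply: (neq _ _ ((1 - t) * (t + 1) / t))
| apply: (neq _ _ (- (t ^+ 2 - t + 1) / t))
| apply: (neq _ _ ((t + 1) / (t - 1)))
| apply: (neq _ _ ((2 * t - 1) / (t * (t - 1))))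
| apply: (neq _ _ ((t ^+ 2 - t + 1) / (t * (t - 1))))
| apply: (neq _ _ ((t ^+ 2 - t + 1) / (t * (1 - t))))
| apply: (neq _ _ ((2 * t - 1) / (t * (1 - t))))
| apply: (neq _ _ ((t - 2) / t))
].
all: first [by field; rewrite ?t0 ?t1' ?t1'' | idtac].
all: by rewrite ?invfM; repeat apply: mulf_neq0; rewrite ?invr_eq0 ?oppr_eq0.
Qed.

Lemma legendre_lambda_perms (a b c : rat) : distinct3 (a, b, c) ->
  map legendre_lambda (perms3 (a, b, c)) = anharmonic (legendre_lambda (a, b, c)).
Proof.
rewrite /= !inE !negb_or andbT -andbA => /and3P[ab ac bc].
rewrite /anharmonic /=; congr [:: _; _; _; _; _; _]; field.
all: repeat (apply/andP; split); apply/eqP => E.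
all: first [ by apply/(negP ab)/eqP; lra
           | by apply/(negP ac)/eqP; lra
           | by apply/(negP bc)/eqP; lra ].
Qed.

Lemma twist_fibre (p0 : rat * int) : inG p0 -> forall p : rat * int,
  (inG p /\ Qiso (twA p) (twB p) (twA p0) (twB p0)) <->
  p \in map twist_index (perms3 (twist_roots p0)).
Proof.
move=> G_p0 p; have [_ disc_p0] := G_p0; split.
  move=> [G_p /QisoP[u u0 [AE BE]]]; have [_ disc_p] := G_p.
  have roots_p := cubic_roots_twist p; rewrite {1}AE {1}BE in roots_p.
  have := cubic_roots_in_perms3 (cubic_roots_distinct disc_p (cubic_roots_twist p))
    roots_p (cubic_roots_scale u (cubic_roots_twist p0)).
  rewrite perms3_scale => /mapP[r r_perm rE].
  by rewrite -(twist_index_twist G_p) rE twist_index_scale // map_f.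
move=> /mapP[r r_perm ->].
have [] := twist_index_spec disc_p0 (cubic_roots_perm (cubic_roots_twist p0) r_perm).
by split=> //; exact: Qiso_sym.
Qed.

Lemma twist_fibre_uniq (p0 : rat * int) : inG p0 -> twB p0 != 0 ->
  uniq (map twist_index (perms3 (twist_roots p0))).
Proof.
case: p0 => t0 d0 G_p0 B0; have [_ disc_p0] := G_p0.
have roots_uniq := cubic_roots_distinct disc_p0 (cubic_roots_twist (t0, d0)).
apply: (@map_uniq _ _ fst); rewrite -map_comp (eq_map (_ : _ =1 legendre_lambda)) //.
move: roots_uniq; rewrite /twist_roots => /legendre_lambda_perms->.
have -> : legendre_lambda (twist_roots (t0, d0)) = t0 := congr1 fst (twist_index_twist G_p0).
have t0_0 : t0 != 0 by apply: contra_neq disc_p0 => ->; rewrite disc_twist; ring.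
have t0_1 : t0 != 1 by apply: contra_neq disc_p0 => ->; rewrite disc_twist; ring.
have : (2 * t0 - 1) * (t0 - 2) * (t0 + 1) != 0.
  apply: contra_neq B0 => g0.
  transitivity (-27 * d0%:~R ^+ 3 * ((2 * t0 - 1) * (t0 - 2) * (t0 + 1))).
    by rewrite /twB /gg /=; ring.
  by rewrite g0 mulr0.
rewrite !mulf_eq0 !negb_or => /andP[/andP[t0_half t0_2] t0_N1].
exact: anharmonic_uniq.
Qed.

Theorem lemma6p3 :
  (forall A B : rat, disc A B != 0 -> Z2xZ2_embeds A B ->
     jinv A B != 0 -> jinv A B != 1728 ->
     exists p : rat * int, inG p /\ Qiso A B (twA p) (twB p)) /\
  (forall p0 : rat * int, inG p0 ->
     jinv (twA p0) (twB p0) != 0 -> jinv (twA p0) (twB p0) != 1728 ->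
     exists s : seq (rat * int), uniq s /\ size s = 6%N /\
       forall p : rat * int,
         (inG p /\ Qiso (twA p) (twB p) (twA p0) (twB p0)) <-> p \in s).
Proof.
split.
  move=> A B disc0 /Z2xZ2_roots[r roots_r] _ _.
  by exists (twist_index r); exact: twist_index_spec.
move=> p0 G_p0 _ j1728.
have B0 : twB p0 != 0 by apply: contra_neq j1728; apply: jinv_B0; case: G_p0.
exists (map twist_index (perms3 (twist_roots p0))).
split; first exact: twist_fibre_uniq.
by split; [rewrite size_map; case: twist_roots => [[]] | exact: twist_fibre].
Qed.
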